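(* Let $(\mu_z^\varepsilon)$ be a time-analytic local random walk on $\mathcal G$. Then for every pair of distinct vertices $x,y$ the continuous-time Ollivier–Ricci curvature ${}^{\mathcal O}\mathrm{Ric}(x,y)=\lim_{\varepsilon\downarrow0}\varepsilon^{-1}\,{}^{\mathcal O}\mathrm{Ric}_\varepsilon(x,y)$ exists and is finite.
   Context: $\mathcal G$ is a locally finite graph with vertex set $V$, $\mathrm d$ a distance on $V$ with $(V,\mathrm d)$ complete. A random walk is a family of probability measures $\mu_z^\varepsilon$ on $V$ ($z\in V$, $\varepsilon\in[0,1]$) with finite first moments, continuous in $\varepsilon$, $\mu_z^0=\delta_z$. It is local if for each $z$ there is a finite set $\mathcal K_z$ with $\mathrm{supp}(\mu_z^\varepsilon)\subset\mathcal K_z$ for all $\varepsilon$. It is time-analytic if for all $x,y$, $\varepsilon\mapsto\mu_x^\varepsilon(y)$ is analytic and admits an analytic continuation to $(-\delta_{xy},1+\delta_{xy})$ for some $\delta_{xy}>0$. ${}^{\mathcal O}\mathrm{Ric}_\varepsilon(x,y):=1-\mathcal W_1(\mu_x^\varepsilon,\mu_y^\varepsilon)/\mathrm d(x,y)$, with $\mathcal W_1$ the $L^1$-Wasserstein distance w.r.t. $\mathrm d$. *)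

From HB Require Import structures.
From mathcomp Require Import all_boot all_order all_algebra.
From mathcomp Require Import all_classical all_reals all_analysis.
Set Implicit Arguments. Unset Strict Implicit. Unset Printing Implicit Defensive.
Import Order.TTheory GRing.Theory Num.Theory.
Import numFieldNormedType.Exports.
Local Open Scope classical_set_scope.
Local Open Scope ring_scope.

Section Defs.
Variables (R : realType) (V : choiceType).

Definition locally_finite_graph (E : V -> V -> Prop) : Prop :=
  (forall x y, E x y -> E y x) /\ (forall x, ~ E x x) /\
  (forall x, finite_set [set y | E x y]).

Definition is_distance (d : V -> V -> R) : Prop :=
  (forall x y, 0 <= d x y) /\ (forall x y, d x y = 0 <-> x = y) /\
  (forall x y, d x y = d y x) /\ (forall x y z, d x z <= d x y + d y z).

Definition d_cauchy (d : V -> V -> R) (u : nat -> V) : Prop :=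
  forall e : R, 0 < e -> exists N : nat,
    forall m n : nat, (N <= m)%N -> (N <= n)%N -> d (u m) (u n) < e.

Definition d_complete (d : V -> V -> R) : Prop :=
  forall u : nat -> V, d_cauchy d u ->
    exists l : V, (fun n => d (u n) l) @ \oo --> (0 : R).

Definition prob_measure (m : V -> R) : Prop :=
  (forall v, 0 <= m v) /\ (\esum_(v in [set: V]) (m v)%:E = 1%E).

Definition finite_first_moment (d : V -> V -> R) (m : V -> R) : Prop :=
  exists z : V, (\esum_(v in [set: V]) (d z v * m v)%:E < +oo)%E.

(* mu z eps y = mu_z^eps(y); only eps in [0,1] is relevant *)
Definition random_walk (d : V -> V -> R) (mu : V -> R -> V -> R) : Prop :=
  forall z : V,
    (forall eps : R, 0 <= eps <= 1 ->
       prob_measure (mu z eps) /\ finite_first_moment d (mu z eps)) /\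
    (forall y : V, {within `[0, 1], continuous (fun eps => mu z eps y)}) /\
    (forall y : V, mu z 0 y = if y == z then 1 else 0).

Definition local_walk (mu : V -> R -> V -> R) : Prop :=
  forall z : V, exists K : set V, finite_set K /\
    forall eps : R, 0 <= eps <= 1 -> forall y : V, mu z eps y != 0 -> K y.

Definition real_analytic_on (I : set R) (f : R -> R) : Prop :=
  forall t0, I t0 -> exists r : R, 0 < r /\ exists a : nat -> R,
    forall t, `|t - t0| < r ->
      (fun N : nat => \sum_(0 <= n < N) a n * (t - t0) ^+ n) @ \oo --> f t.

Definition time_analytic (mu : V -> R -> V -> R) : Prop :=
  forall x y : V, exists delta : R, 0 < delta /\ exists f : R -> R,
    real_analytic_on [set t | - delta < t < 1 + delta] f /\
    forall eps : R, 0 <= eps <= 1 -> f eps = mu x eps y.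

Definition is_coupling (m n : V -> R) (p : V -> V -> R) : Prop :=
  (forall a b, 0 <= p a b) /\
  (forall a, \esum_(b in [set: V]) (p a b)%:E = (m a)%:E) /\
  (forall b, \esum_(a in [set: V]) (p a b)%:E = (n b)%:E).

Definition transport_cost (d : V -> V -> R) (p : V -> V -> R) : \bar R :=
  \esum_(ab in [set: V * V]) (d ab.1 ab.2 * p ab.1 ab.2)%:E.

Definition W1 (d : V -> V -> R) (m n : V -> R) : \bar R :=
  ereal_inf [set transport_cost d p | p in [set p | is_coupling m n p]].

(* Ollivier-Ricci curvature Ric_eps(x,y) = 1 - W1(mu_x^eps, mu_y^eps)/d(x,y)
   (W1 is finite for measures with finite first moments) *)
Definition ORic_eps (d : V -> V -> R) (mu : V -> R -> V -> R) (eps : R)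
    (x y : V) : R :=
  1 - fine (W1 d (mu x eps) (mu y eps)) / d x y.

End Defs.

(* Only finitely many vertices carry mass near x and y, so W1 is a finite
   transport problem.  By analyticity mu_z^t = delta_z + t A_z + O(t^2)
   uniformly on that support, and W1 is Lipschitz for the l^1 distance of its
   arguments, so W1(mu_x^t, mu_y^t) = psi t + O(t^2) where psi t is the W1
   distance between the linearized measures delta_x + t A_x and delta_y + t A_y.
   Mixing couplings shows that psi is convex with psi 0 <= d x y, so the chord
   slopes (psi t - d x y) / t are nondecreasing; duality against d(., y) bounds
   them from below, hence they converge as t decreases to 0, and the curvature
   quotient is minus this slope divided by d x y. *)

From HB Require Import structures.
From mathcomp Require Import all_boot all_order all_algebra.
From mathcomp Require Import all_classical all_reals all_analysis.
From mathcomp Require Import ring lra.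
Import Order.TTheory GRing.Theory Num.Theory.
Import numFieldNormedType.Exports.
Local Open Scope classical_set_scope.
Local Open Scope ring_scope.
Set Implicit Arguments. Unset Strict Implicit. Unset Printing Implicit Defensive.

Section PowerSeries.
Variable R : realType.

Lemma sum_geom_le (q : R) m : 0 <= q -> q <= 1 / 2 ->
  \sum_(n < m) q ^+ n <= 2 - 2 * q ^+ m.
Proof.
move=> q_ge0 q_le; elim: m => [|m IH]; first by rewrite big_ord0 expr0; lra.
rewrite big_ord_recl expr0 /=.
under eq_bigr do rewrite /bump /= add1n exprS.
rewrite -mulr_sumr exprS.
have := exprn_ge0 m q_ge0; nra.
Qed.

Lemma cvgn_power_series_terms_bounded (a : nat -> R) (x l : R) :
  (fun N : nat => \sum_(0 <= n < N) a n * x ^+ n) @ \oo --> l ->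
  exists2 B : R, 0 < B & forall n, `|a n * x ^+ n| <= B.
Proof.
move=> conv.
have /cvg_seq_bounded/pinfty_ex_gt0[B B_gt0 /= partialB] :
  cvgn (fun N : nat => \sum_(0 <= n < N) a n * x ^+ n) by apply/cvg_ex; exists l.
exists (2 * B) => [|n]; first by rewrite mulr_gt0.
have := partialB n.+1; rewrite big_nat_recr //= => partialSn.
set S := \sum_(0 <= i < n) _ in partialSn.
have -> : a n * x ^+ n = (S + a n * x ^+ n) - S by rewrite addrAC subrr add0r.
by apply: le_trans (ler_normB _ _) _; have := partialB n; lra.
Qed.

(* The tail from degree 2 on is dominated by a geometric series of ratio
   [|h| / rho <= 1/2]. *)
Lemma power_series_remainder_le (a : nat -> R) (rho B h : R) m : 0 < rho ->
  (forall n, `|a n * rho ^+ n| <= B) -> `|h| <= rho / 2 ->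
  `|\sum_(0 <= n < m.+2) a n * h ^+ n - a 0%N - a 1%N * h|
    <= 2 * B / rho ^+ 2 * h ^+ 2.
Proof.
move=> rho_gt0 aB h_le; pose q := `|h| / rho.
have q_ge0 : 0 <= q by rewrite divr_ge0 // ltW.
have q_le : q <= 1 / 2 by rewrite /q ler_pdivrMr //; lra.
have Bq_ge0 : 0 <= B * q ^+ 2.
  by rewrite mulr_ge0 ?exprn_ge0 // (le_trans _ (aB 0%N)).
have term_le n : `|a n * h ^+ n| <= B * q ^+ n.
  have -> : `|a n * h ^+ n| = `|a n * rho ^+ n| * q ^+ n.
    rewrite !normrM !normrX (gtr0_norm rho_gt0) /q exprMn exprVn.
    by field; rewrite gt_eqF // exprn_gt0.
  by apply: ler_wpM2r; [exact: exprn_ge0 | exact: aB].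
have -> : 2 * B / rho ^+ 2 * h ^+ 2 = 2 * (B * q ^+ 2).
  rewrite /q expr_div_n real_normK ?num_real //.
  by field; rewrite gt_eqF // exprn_gt0.
rewrite big_nat_recl // big_nat_recl // expr0 expr1 mulr1.
have -> : a 0%N + (a 1%N * h + \sum_(0 <= i < m) a i.+2 * h ^+ i.+2)
    - a 0%N - a 1%N * h = \sum_(0 <= i < m) a i.+2 * h ^+ i.+2 by ring.
rewrite big_mkord; apply: (le_trans (ler_norm_sum _ _ _)).
apply: (@le_trans _ _ (\sum_(i < m) B * q ^+ 2 * q ^+ i)).
  by apply: ler_sum => i _; rewrite -mulrA -exprD addnC addn2; apply: term_le.
rewrite -mulr_sumr; have := ler_wpM2l Bq_ge0 (sum_geom_le m q_ge0 q_le).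
have := exprn_ge0 m q_ge0; nra.
Qed.

Lemma power_series_taylor1 (f : R -> R) (t0 r : R) (a : nat -> R) : 0 < r ->
  (forall t, `|t - t0| < r ->
     (fun N : nat => \sum_(0 <= n < N) a n * (t - t0) ^+ n) @ \oo --> f t) ->
  exists2 tau : R, 0 < tau & exists K : R, forall t, `|t - t0| <= tau ->
    `|f t - a 0%N - a 1%N * (t - t0)| <= K * (t - t0) ^+ 2.
Proof.
move=> r_gt0 conv; pose rho := r / 2.
have rho_gt0 : 0 < rho by rewrite divr_gt0.
have rho_lt_r : rho < r by rewrite /rho; lra.
clearbody rho.
have [B _ aB] : exists2 B : R, 0 < B & forall n, `|a n * rho ^+ n| <= B.
  have rhoE : t0 + rho - t0 = rho by rewrite addrAC subrr add0r.
  have := conv (t0 + rho); rewrite rhoE gtr0_norm // => /(_ rho_lt_r).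
  exact: cvgn_power_series_terms_bounded.
exists (rho / 2); first by rewrite divr_gt0.
exists (2 * B / rho ^+ 2) => t ht.
have : `|t - t0| < r by lra.
move: ht; set h := t - t0 => ht /conv cvg_sum.
have cvg_rem : (fun N => `|\sum_(0 <= n < N) a n * h ^+ n - a 0%N - a 1%N * h|)
    @ \oo --> `|f t - a 0%N - a 1%N * h|.
  apply: cvg_norm; apply: cvgB; last exact: cvg_cst.
  by apply: cvgB; [exact: cvg_sum | exact: cvg_cst].
apply: (ler_cvg_to cvg_rem (cvg_cst _)); near=> N.
have N_ge2 : (2 <= N)%N by near: N; exists 2%N.
by rewrite -(subnK N_ge2) addn2; apply: power_series_remainder_le.
Unshelve. all: end_near.
Qed.

End PowerSeries.

Section SeqSums.
Variables (R : numDomainType) (T : eqType).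
Implicit Types (r : seq T) (F G : T -> R).

Lemma sumr_ge0_seq r F : (forall i, i \in r -> 0 <= F i) -> 0 <= \sum_(i <- r) F i.
Proof. by move=> F_ge0; rewrite big_seq; apply: sumr_ge0. Qed.

Lemma ler_sum_seq r F G :
  (forall i, i \in r -> F i <= G i) -> \sum_(i <- r) F i <= \sum_(i <- r) G i.
Proof. by move=> FG; rewrite big_seq [X in _ <= X]big_seq; apply: ler_sum. Qed.

Lemma psumr_eq0_seq r F : (forall i, i \in r -> 0 <= F i) ->
  \sum_(i <- r) F i = 0 -> forall i, i \in r -> F i = 0.
Proof.
move=> F_ge0 sum0 i ir.
have : \sum_(j <- r | j \in r) F j == 0 by rewrite -big_seq sum0.
rewrite psumr_eq0; last by move=> j; apply: F_ge0.
by move=> /allP /(_ i ir); rewrite ir /= => /eqP.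
Qed.

Lemma ler_sum_term r F i : uniq r -> i \in r ->
  (forall j, j \in r -> 0 <= F j) -> F i <= \sum_(j <- r) F j.
Proof.
move=> r_uniq ir F_ge0; rewrite (bigD1_seq i) //= lerDl big_seq_cond sumr_ge0 //.
by move=> j /andP[jr _]; apply: F_ge0.
Qed.

Lemma sum_mul_delta r F i : uniq r -> i \in r ->
  \sum_(j <- r) F j * (if j == i then 1 else 0) = F i.
Proof.
move=> r_uniq ir; rewrite (bigD1_seq i) //= eqxx mulr1 big1 ?addr0 //.
by move=> j /negPf ->; rewrite mulr0.
Qed.

Lemma sumr_const_seq r (c : R) : \sum_(i <- r) c = c *+ size r.
Proof. by rewrite big_const_seq count_predT iter_addr addr0. Qed.

End SeqSums.

Section FiniteTransport.
Variables (R : realType) (V : choiceType).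
Implicit Types (s : seq V) (m n : V -> R) (p : V -> V -> R) (c : V -> V -> R).

Definition fin_prob s m :=
  [/\ forall v, 0 <= m v, forall v, v \notin s -> m v = 0 & \sum_(v <- s) m v = 1].

Definition fin_coupling s m n p :=
  [/\ forall a b, a \in s -> b \in s -> 0 <= p a b,
      forall a, a \in s -> \sum_(b <- s) p a b = m a &
      forall b, b \in s -> \sum_(a <- s) p a b = n b].

Definition fin_cost c s p := \sum_(a <- s) \sum_(b <- s) c a b * p a b.

Definition zero_ext s p a b := if (a \in s) && (b \in s) then p a b else 0.

Lemma esum_fin_support (T : choiceType) (r : seq T) (f : T -> R) : uniq r ->
  (forall v, 0 <= f v) -> (forall v, v \notin r -> f v = 0) ->
  \esum_(v in [set: T]) (f v)%:E = (\sum_(v <- r) f v)%:E.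
Proof.
move=> r_uniq f_ge0 f_supp.
have -> : \esum_(v in [set: T]) (f v)%:E = \esum_(v in [set` r]) (f v)%:E.
  rewrite [RHS]esum_mkcond; apply: eq_esum => v _.
  by case: ifPn => //; rewrite mem_setE => /f_supp ->.
rewrite esum_fset; last 2 first.
- exact: finite_seq.
- by move=> i _; rewrite lee_fin.
by rewrite -fsbig_seq // sumEFin.
Qed.

Lemma esum_ge_term (T : choiceType) (f : T -> R) v : (forall u, 0 <= f u) ->
  ((f v)%:E <= \esum_(u in [set: T]) (f u)%:E)%E.
Proof.
move=> f_ge0; apply: esum_ge; exists [set v]; last by rewrite fsbig_set1.
by split => //; exact: finite_set1.
Qed.

Lemma fin_prob_of_prob_measure s m : uniq s -> prob_measure m ->
  (forall v, v \notin s -> m v = 0) -> fin_prob s m.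
Proof.
move=> s_uniq [m_ge0 m1] m_supp; split => //.
by move: m1; rewrite (esum_fin_support s_uniq m_ge0 m_supp) => -[].
Qed.

Lemma fin_coupling_prod s m n : fin_prob s m -> fin_prob s n ->
  fin_coupling s m n (fun a b => m a * n b).
Proof.
case=> m_ge0 _ m1 [n_ge0 _ n1]; split.
- by move=> a b _ _; rewrite mulr_ge0.
- by move=> a _; rewrite -mulr_sumr n1 mulr1.
- by move=> b _; rewrite -mulr_suml m1 mul1r.
Qed.

Lemma fin_coupling_swap s m n p :
  fin_coupling s m n p -> fin_coupling s n m (fun a b => p b a).
Proof. by case=> p_ge0 pm pn; split => // a b ha hb; apply: p_ge0. Qed.

Lemma fin_cost_swap c s p :
  fin_cost c s p = fin_cost (fun a b => c b a) s (fun a b => p b a).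
Proof. by rewrite /fin_cost exchange_big. Qed.

Lemma fin_coupling_mix s (lam : R) m n p m' n' p' :
  0 <= lam <= 1 -> fin_coupling s m n p -> fin_coupling s m' n' p' ->
  fin_coupling s (fun v => lam * m v + (1 - lam) * m' v)
    (fun v => lam * n v + (1 - lam) * n' v)
    (fun a b => lam * p a b + (1 - lam) * p' a b).
Proof.
move=> /andP[lam_ge0 lam_le1] [p_ge0 pm pn] [p'_ge0 p'm p'n]; split.
- move=> a b ha hb; rewrite addr_ge0 // mulr_ge0 ?p_ge0 ?p'_ge0 //; lra.
- by move=> a ha; rewrite big_split /= -!mulr_sumr pm // p'm.
- by move=> b hb; rewrite big_split /= -!mulr_sumr pn // p'n.
Qed.

Lemma fin_cost_mix c s (al be : R) p p' :
  fin_cost c s (fun a b => al * p a b + be * p' a b) =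
    al * fin_cost c s p + be * fin_cost c s p'.
Proof.
rewrite /fin_cost !mulr_sumr -big_split; apply: eq_bigr => a _.
rewrite !mulr_sumr -big_split; apply: eq_bigr => b _ /=; ring.
Qed.

Variables (d : V -> V -> R) (s : seq V).
Hypotheses (s_uniq : uniq s) (d_ge0 : forall a b, 0 <= d a b).

Lemma fin_cost_ge0 m n p : fin_coupling s m n p -> 0 <= fin_cost d s p.
Proof.
case=> p_ge0 _ _; apply: sumr_ge0_seq => a ha.
by apply: sumr_ge0_seq => b hb; rewrite mulr_ge0 // p_ge0.
Qed.

Lemma transport_cost_fin p : (forall a b, 0 <= p a b) ->
  (forall a b, (a \notin s) || (b \notin s) -> p a b = 0) ->
  transport_cost d p = (fin_cost d s p)%:E.
Proof.
move=> p_ge0 p_supp.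
rewrite /transport_cost (@esum_fin_support _ [seq (a, b) | a <- s, b <- s]).
- by rewrite big_allpairs.
- by apply: allpairs_uniq => // -[a b] [a' b'] _ _ /= [-> ->].
- by move=> [a b]; rewrite mulr_ge0.
- move=> [a b] /= hab; rewrite p_supp ?mulr0 //.
  apply: contraNT hab; rewrite negb_or !negbK => /andP[ha hb].
  exact: (allpairs_f pair ha hb).
Qed.

Lemma fin_coupling_of_coupling m n p : fin_prob s m -> fin_prob s n ->
  is_coupling m n p ->
  fin_coupling s m n p /\ transport_cost d p = (fin_cost d s p)%:E.
Proof.
case=> _ m_supp _ [_ n_supp _] [p_ge0 [pm pn]].
have p_suppl a b : a \notin s -> p a b = 0.
  move=> ha; apply/eqP; rewrite eq_le p_ge0 andbT.
  by have := esum_ge_term b (p_ge0 a); rewrite pm m_supp // lee_fin.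
have p_suppr a b : b \notin s -> p a b = 0.
  move=> hb; apply/eqP; rewrite eq_le p_ge0 andbT.
  by have := esum_ge_term a (p_ge0^~ b); rewrite pn n_supp // lee_fin.
split; last by apply: transport_cost_fin => // a b /orP[/p_suppl | /p_suppr].
split => [a b _ _ | a _ | b _]; first exact: p_ge0.
- by have := pm a; rewrite (esum_fin_support s_uniq (p_ge0 a) (p_suppr a)) => -[].
- have := pn b; rewrite (esum_fin_support s_uniq (p_ge0^~ b) (p_suppl^~ b)).
  by case.
Qed.

Lemma coupling_of_fin_coupling m n p : fin_prob s m -> fin_prob s n ->
  fin_coupling s m n p ->
  is_coupling m n (zero_ext s p) /\
  transport_cost d (zero_ext s p) = (fin_cost d s p)%:E.
Proof.
case=> _ m_supp _ [_ n_supp _] [p_ge0 pm pn].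
have ext_ge0 a b : 0 <= zero_ext s p a b.
  by rewrite /zero_ext; case: ifPn => // /andP[]; apply: p_ge0.
have ext_supp a b : (a \notin s) || (b \notin s) -> zero_ext s p a b = 0.
  by rewrite /zero_ext -negb_and => /negPf ->.
have ext_in a b : a \in s -> b \in s -> zero_ext s p a b = p a b.
  by rewrite /zero_ext => -> ->.
split; last first.
  rewrite transport_cost_fin //; congr (_%:E); apply: eq_big_seq => a ha.
  by apply: eq_big_seq => b hb; rewrite ext_in.
split; [exact: ext_ge0 | split].
- move=> a; rewrite (@esum_fin_support _ s) //; last first.
    by move=> b hb; apply: ext_supp; rewrite hb orbT.
  case: (boolP (a \in s)) => ha; last first.
    by rewrite m_supp // big1_seq // => b _; rewrite ext_supp ?ha.
  by rewrite -pm //; congr (_%:E); apply: eq_big_seq => b hb; rewrite ext_in.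
- move=> b; rewrite (@esum_fin_support _ s (zero_ext s p ^~ b)) //; last first.
    by move=> a ha; apply: ext_supp; rewrite ha.
  case: (boolP (b \in s)) => hb; last first.
    by rewrite n_supp // big1_seq // => a _; rewrite ext_supp ?hb ?orbT.
  by rewrite -pn //; congr (_%:E); apply: eq_big_seq => a ha; rewrite ext_in.
Qed.

Lemma W1_fin_num m n : fin_prob s m -> fin_prob s n -> W1 d m n \is a fin_num.
Proof.
move=> m_prob n_prob; rewrite ge0_fin_numE; last first.
  apply: le_ereal_inf_tmp => _ [p p_coupling <-].
  have [p_fin ->] := fin_coupling_of_coupling m_prob n_prob p_coupling.
  by rewrite lee_fin; apply: fin_cost_ge0 p_fin.
have [prod_coupling prod_cost] :=
  coupling_of_fin_coupling m_prob n_prob (fin_coupling_prod m_prob n_prob).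
apply: le_lt_trans (ltry (fin_cost d s (fun a b => m a * n b))).
rewrite -prod_cost; apply: ereal_inf_lbound.
by exists (zero_ext s (fun a b => m a * n b)).
Qed.

Lemma W1_le_fin_cost m n p : fin_prob s m -> fin_prob s n -> fin_coupling s m n p ->
  fine (W1 d m n) <= fin_cost d s p.
Proof.
move=> m_prob n_prob p_fin; rewrite -lee_fin fineK ?W1_fin_num //.
have [p_coupling <-] := coupling_of_fin_coupling m_prob n_prob p_fin.
by apply: ereal_inf_lbound; exists (zero_ext s p).
Qed.

Lemma W1_ge m n (c : R) : fin_prob s m -> fin_prob s n ->
  (forall p, fin_coupling s m n p -> c <= fin_cost d s p) -> c <= fine (W1 d m n).
Proof.
move=> m_prob n_prob c_le; rewrite -lee_fin fineK ?W1_fin_num //.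
apply: le_ereal_inf_tmp => _ [p p_coupling <-].
have [p_fin ->] := fin_coupling_of_coupling m_prob n_prob p_coupling.
by rewrite lee_fin; apply: c_le.
Qed.

Lemma W1_ge_dual m n y : fin_prob s m -> fin_prob s n ->
  (forall a b, d a y <= d a b + d b y) ->
  \sum_(a <- s) d a y * m a - \sum_(b <- s) d b y * n b <= fine (W1 d m n).
Proof.
move=> m_prob n_prob d_tri; apply: W1_ge => // p [p_ge0 pm pn].
have -> : \sum_(a <- s) d a y * m a = \sum_(a <- s) \sum_(b <- s) d a y * p a b.
  by apply: eq_big_seq => a ha; rewrite -pm // mulr_sumr.
have -> : \sum_(b <- s) d b y * n b = \sum_(a <- s) \sum_(b <- s) d b y * p a b.
  by rewrite exchange_big; apply: eq_big_seq => b hb; rewrite -pn // mulr_sumr.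
rewrite -sumrB; apply: ler_sum_seq => a ha; rewrite -sumrB.
apply: ler_sum_seq => b hb; rewrite -mulrBl; apply: ler_wpM2r; first exact: p_ge0.
by have := d_tri a b; lra.
Qed.

Definition affine_path m (A : V -> R) (t : R) v := m v + t * A v.

Lemma affine_path_mix m A (s' t : R) v : t != 0 ->
  affine_path m A s' v = s' / t * affine_path m A t v + (1 - s' / t) * m v.
Proof. by move=> t_neq0; rewrite /affine_path; field. Qed.

(* A coupling at time [t] mixed with a coupling at time [0] is a coupling at
   any intermediate time. *)
Lemma W1_affine_path_convex m1 A1 m2 A2 p0 (s' t : R) : 0 < s' <= t ->
  fin_prob s (affine_path m1 A1 s') -> fin_prob s (affine_path m2 A2 s') ->
  fin_prob s (affine_path m1 A1 t) -> fin_prob s (affine_path m2 A2 t) ->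
  fin_coupling s m1 m2 p0 ->
  fine (W1 d (affine_path m1 A1 s') (affine_path m2 A2 s')) <=
    s' / t * fine (W1 d (affine_path m1 A1 t) (affine_path m2 A2 t))
    + (1 - s' / t) * fin_cost d s p0.
Proof.
move=> /andP[s'_gt0 s'_le_t] prob1s prob2s prob1t prob2t p0_coupling.
have t_gt0 : 0 < t by apply: lt_le_trans s'_le_t.
set lam := s' / t.
have lam_gt0 : 0 < lam by rewrite divr_gt0.
have lam01 : 0 <= lam <= 1 by rewrite ltW //= ler_pdivrMr // mul1r.
have pathE m A :
    affine_path m A s' = fun v => lam * affine_path m A t v + (1 - lam) * m v.
  by apply/funext => v; rewrite (affine_path_mix _ _ _ _ (lt0r_neq0 t_gt0)).
suff : (fine (W1 d (affine_path m1 A1 s') (affine_path m2 A2 s'))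
         - (1 - lam) * fin_cost d s p0) / lam
       <= fine (W1 d (affine_path m1 A1 t) (affine_path m2 A2 t)).
  by rewrite ler_pdivrMr //; lra.
apply: W1_ge => // p p_coupling.
have := fin_coupling_mix lam01 p_coupling p0_coupling.
rewrite -!pathE => mix_coupling.
have := W1_le_fin_cost prob1s prob2s mix_coupling; rewrite fin_cost_mix.
by rewrite ler_pdivrMr //; lra.
Qed.

End FiniteTransport.

Section CouplingPerturbation.
Variables (R : realType) (V : choiceType) (s : seq V) (m m' n : V -> R).
Variable p' : V -> V -> R.
Hypotheses (m_prob : fin_prob s m) (m'_prob : fin_prob s m') (n_prob : fin_prob s n).
Hypothesis p'_coupling : fin_coupling s m' n p'.

(* Keep the fraction [min (m a) (m' a) / m' a] of each row of [p'], and spread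
   the remaining mass of [m] proportionally to what is still missing from [n]. *)
Let ratio a := if m' a == 0 then 0 else Num.min (m a) (m' a) / m' a.
Let excess a := m a - Num.min (m a) (m' a).
Let deficit b := n b - \sum_(a <- s) ratio a * p' a b.
Let mass := \sum_(a <- s) excess a.

Definition perturbed_coupling a b := ratio a * p' a b + excess a * deficit b / mass.

Let ratio_bounds a : 0 <= ratio a <= 1.
Proof.
have [[m_ge0 _ _] [m'_ge0 _ _]] := (m_prob, m'_prob).
rewrite /ratio; case: eqP => [_|/eqP m'a_neq0]; first by rewrite lexx ler01.
have m'a_gt0 : 0 < m' a by rewrite lt_def m'a_neq0 m'_ge0.
rewrite divr_ge0 ?le_min ?m_ge0 ?m'_ge0 //=.
by rewrite ler_pdivrMr // mul1r ge_min lexx orbT.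
Qed.

Let ratio_mul a : ratio a * m' a = Num.min (m a) (m' a).
Proof.
have [m_ge0 _ _] := m_prob.
rewrite /ratio; case: eqP => [->|/eqP m'a_neq0]; last by rewrite divfK.
by rewrite mul0r min_r ?m_ge0.
Qed.

Let excess_ge0 a : 0 <= excess a.
Proof. by rewrite /excess subr_ge0 ge_min lexx. Qed.

Let excess_le a : excess a <= `|m a - m' a|.
Proof.
rewrite /excess; case: (leP (m a) (m' a)) => _; first by rewrite subrr normr_ge0.
exact: ler_norm.
Qed.

Let deficit_ge0 b : b \in s -> 0 <= deficit b.
Proof.
have [p'_ge0 _ p'n] := p'_coupling.
move=> hb; rewrite /deficit -p'n // -sumrB; apply: sumr_ge0_seq => a ha.
have /andP[_ r_le1] := ratio_bounds a; have := p'_ge0 a b ha hb; nra.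
Qed.

Let sum_deficit : \sum_(b <- s) deficit b = mass.
Proof.
have [[[_ _ m1] [_ _ n1]] [_ p'm _]] := (m_prob, n_prob, p'_coupling).
rewrite /deficit /mass /excess sumrB n1 sumrB m1; congr (_ - _).
rewrite exchange_big /=; apply: eq_big_seq => a ha.
by rewrite -mulr_sumr p'm // ratio_mul.
Qed.

Lemma perturbed_coupling_fin : fin_coupling s m n perturbed_coupling.
Proof.
have [p'_ge0 p'm p'n] := p'_coupling.
have mass_ge0 : 0 <= mass by apply: sumr_ge0_seq.
split.
- move=> a b ha hb; have /andP[r_ge0 _] := ratio_bounds a.
  by rewrite addr_ge0 ?mulr_ge0 ?p'_ge0 ?excess_ge0 ?deficit_ge0 ?invr_ge0.
- move=> a ha; rewrite big_split /= -mulr_sumr p'm // ratio_mul.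
  rewrite -mulr_suml -mulr_sumr sum_deficit.
  have [mass0|mass_neq0] := eqVneq mass 0; last first.
    by rewrite mulfK // /excess addrC subrK.
  rewrite mass0 invr0 mulr0 addr0.
  have := psumr_eq0_seq (fun a _ => excess_ge0 a) mass0 ha.
  by rewrite /excess => /eqP; rewrite subr_eq0 => /eqP.
- move=> b hb; rewrite big_split /= -mulr_suml -mulr_suml -/mass.
  have [mass0|mass_neq0] := eqVneq mass 0; last first.
    by rewrite mulrAC divff // mul1r /deficit addrC subrK.
  have := psumr_eq0_seq deficit_ge0 (etrans sum_deficit mass0) hb.
  by rewrite mass0 invr0 mulr0 addr0 /deficit => /eqP; rewrite subr_eq0 => /eqP.
Qed.

Lemma fin_cost_perturbed c D :
  (forall a b, a \in s -> b \in s -> 0 <= c a b <= D) ->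
  fin_cost c s perturbed_coupling
    <= fin_cost c s p' + D * \sum_(v <- s) `|m v - m' v|.
Proof.
move=> c_bound; have [p'_ge0 _ _] := p'_coupling.
have D_ge0 : 0 <= D.
  case: m_prob => _ _; case: s c_bound => [|a s0] c_bound' m1.
    by rewrite big_nil in m1; lra.
  by have /andP[] := c_bound' a a (mem_head _ _) (mem_head _ _); lra.
have mixed_le : \sum_(a <- s) \sum_(b <- s) excess a * deficit b / mass <= mass.
  under eq_bigr do rewrite -mulr_suml -mulr_sumr sum_deficit.
  rewrite -mulr_suml -mulr_suml -/mass.
  by have [->|mass_neq0] := eqVneq mass 0; [rewrite mulr0 mul0r | rewrite mulfK].
apply: (@le_trans _ _ (fin_cost c s p'
    + D * \sum_(a <- s) \sum_(b <- s) excess a * deficit b / mass)).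
  rewrite /fin_cost mulr_sumr -big_split /=; apply: ler_sum_seq => a ha.
  rewrite mulr_sumr -big_split /=; apply: ler_sum_seq => b hb.
  have /andP[c_ge0 c_le] := c_bound a b ha hb.
  have /andP[r_ge0 r_le1] := ratio_bounds a.
  rewrite /perturbed_coupling mulrDr; apply: lerD.
    by rewrite mulrCA; apply: ler_piMl; rewrite ?mulr_ge0 ?p'_ge0.
  apply: ler_wpM2r => //; rewrite divr_ge0 ?mulr_ge0 ?deficit_ge0 //.
  exact: sumr_ge0_seq.
rewrite lerD2l; apply: ler_wpM2l => //.
by apply: (le_trans mixed_le); apply: ler_sum_seq => a _; apply: excess_le.
Qed.

End CouplingPerturbation.

Section W1Lipschitz.
Variables (R : realType) (V : choiceType) (d : V -> V -> R) (s : seq V) (D : R).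
Hypotheses (s_uniq : uniq s) (d_ge0 : forall a b, 0 <= d a b).
Hypothesis d_le : forall a b, a \in s -> b \in s -> d a b <= D.

Lemma W1_lipschitzl m m' n : fin_prob s m -> fin_prob s m' -> fin_prob s n ->
  fine (W1 d m n) <= fine (W1 d m' n) + D * \sum_(v <- s) `|m v - m' v|.
Proof.
move=> m_prob m'_prob n_prob; rewrite -lerBlDr.
apply: (W1_ge s_uniq d_ge0 m'_prob n_prob) => p' p'_coupling.
have := W1_le_fin_cost s_uniq d_ge0 m_prob n_prob
  (perturbed_coupling_fin m_prob m'_prob n_prob p'_coupling).
have := fin_cost_perturbed m_prob m'_prob n_prob p'_coupling
  (fun a b ha hb => introT andP (conj (d_ge0 a b) (d_le ha hb))).
lra.
Qed.

Lemma W1_lipschitzr m n n' : fin_prob s m -> fin_prob s n -> fin_prob s n' ->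
  fine (W1 d m n) <= fine (W1 d m n') + D * \sum_(v <- s) `|n v - n' v|.
Proof.
move=> m_prob n_prob n'_prob; rewrite -lerBlDr.
apply: (W1_ge s_uniq d_ge0 m_prob n'_prob) => p' p'_coupling.
have p'T_coupling := fin_coupling_swap p'_coupling.
have := W1_le_fin_cost s_uniq d_ge0 m_prob n_prob
  (fin_coupling_swap (perturbed_coupling_fin n_prob n'_prob m_prob p'T_coupling)).
have := fin_cost_perturbed n_prob n'_prob m_prob p'T_coupling
  (fun a b ha hb => introT andP (conj (d_ge0 b a) (d_le hb ha))).
rewrite [fin_cost d s p']fin_cost_swap fin_cost_swap /=; lra.
Qed.

Lemma W1_lipschitz m n m' n' :
  fin_prob s m -> fin_prob s n -> fin_prob s m' -> fin_prob s n' ->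
  `|fine (W1 d m n) - fine (W1 d m' n')| <=
    D * (\sum_(v <- s) `|m v - m' v| + \sum_(v <- s) `|n v - n' v|).
Proof.
move=> m_prob n_prob m'_prob n'_prob.
have sum_distC (f g : V -> R) :
    \sum_(v <- s) `|g v - f v| = \sum_(v <- s) `|f v - g v|.
  by apply: eq_bigr => v _; rewrite distrC.
have := W1_lipschitzl m_prob m'_prob n_prob.
have := W1_lipschitzr m'_prob n_prob n'_prob.
have := W1_lipschitzl m'_prob m_prob n'_prob; rewrite sum_distC.
have := W1_lipschitzr m_prob n'_prob n_prob; rewrite sum_distC.
rewrite ler_norml; lra.
Qed.

End W1Lipschitz.

Lemma le0_of_le_linear (R : realFieldType) (tau K a : R) : 0 < tau -> 0 <= K ->
  (forall t : R, 0 < t -> t <= tau -> a <= K * t) -> a <= 0.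
Proof.
move=> tau_gt0 K_ge0 a_le; rewrite leNgt; apply/negP => a_gt0.
pose t := Num.min tau (a / (K + 1)).
have t_gt0 : 0 < t by rewrite lt_min tau_gt0 divr_gt0 //; lra.
have : t * (K + 1) <= a by rewrite -ler_pdivlMr ?ge_min ?lexx ?orbT //; lra.
have := a_le t t_gt0; rewrite ge_min lexx => /(_ isT); nra.
Qed.

Section RightSlopes.
Variable R : realType.

Lemma chord_slope_cvg (psi : R -> R) (c c0 t0 : R) : 0 < t0 ->
  (forall s t : R, 0 < s -> s <= t -> t <= t0 ->
     psi s <= s / t * psi t + (1 - s / t) * c) ->
  (forall t : R, 0 < t -> t <= t0 -> c + t * c0 <= psi t) ->
  exists L : R, (psi t - c) / t @[t --> 0^'+] --> L.
Proof.
move=> t0_gt0 convex lower; eexists.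
apply: (@nondecreasing_at_right_cvgr _ _ _ (BRight t0)); first by rewrite bnd_simp.
- move=> s t; rewrite !in_itv /= => /andP[s_gt0 _] /andP[t_gt0 t_le] s_le_t.
  have := convex s t s_gt0 s_le_t t_le; rewrite ler_pdivrMr //.
  have -> : (psi t - c) / t * s = s / t * (psi t - c) by ring.
  lra.
- exists c0 => z [t]; rewrite /= in_itv /= => /andP[t_gt0 t_le] <-.
  by rewrite ler_pdivlMr //; have := lower t t_gt0 t_le; lra.
Qed.

Lemma cvg_at_right0_quadratic_perturb (f g : R -> R) (C t0 L : R) : 0 < t0 ->
  (forall t : R, 0 < t -> t <= t0 -> `|f t - g t| <= C * t ^+ 2) ->
  g t / t @[t --> 0^'+] --> L -> f t / t @[t --> 0^'+] --> L.
Proof.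
move=> t0_gt0 fg g_cvg.
have Ct_cvg : C * t @[t --> 0^'+] --> 0.
  have id_cvg : t @[t --> (0 : R)^'+] --> (0 : R).
    by apply: cvg_at_right_filter; exact: cvg_id.
  by have := cvgMl_tmp (a := C) id_cvg; rewrite mulr0; apply.
apply: (@squeeze_cvgr _ _ _ _ (fun t => g t / t - C * t) (fun t => g t / t + C * t)).
- near=> t.
  have t_gt0 : 0 < t by near: t; apply: nbhs_right_gt.
  have t_le : t <= t0 by near: t; apply: nbhs_right_le.
  rewrite -ler_distl -mulrBl normrM normfV (gtr0_norm t_gt0) ler_pdivrMr //.
  by rewrite -mulrA -expr2; apply: fg.
- by rewrite -[L]subr0; apply: cvgB.
- by rewrite -[L]addr0; apply: cvgD.
Unshelve. all: end_near.
Qed.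

End RightSlopes.

Section FirstOrderExpansion.
Variables (R : realType) (V : choiceType) (s : seq V) (x : V) (m : R -> V -> R).
Variables (A : V -> R) (t0 K : R).
Hypotheses (t0_gt0 : 0 < t0) (K_ge0 : 0 <= K).
Hypothesis m_prob : forall t : R, 0 <= t <= t0 -> fin_prob s (m t).
Hypothesis m0_dirac : forall v, m 0 v = if v == x then 1 else 0.
Hypothesis m_expansion :
  forall (t : R) v, 0 <= t <= t0 -> `|m t v - m 0 v - A v * t| <= K * t ^+ 2.

Let zero_in : 0 <= (0 : R) <= t0. Proof. by rewrite lexx ltW. Qed.

Let pos_in t : 0 < t -> t <= t0 -> 0 <= t <= t0. Proof. by move=> /ltW ->. Qed.

Lemma expansion_sum0 : \sum_(v <- s) A v = 0.
Proof.
apply/eqP; rewrite -normr_le0.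
apply: (le0_of_le_linear t0_gt0 (mulrn_wge0 (size s) K_ge0)) => t t_gt0 t_le.
have [[_ _ mt1] [_ _ m01]] := (m_prob (pos_in t_gt0 t_le), m_prob zero_in).
rewrite -(ler_pM2r t_gt0) -mulrA -expr2.
have -> : `|\sum_(v <- s) A v| * t = `|\sum_(v <- s) (m t v - m 0 v - A v * t)|.
  by rewrite !sumrB mt1 m01 subrr sub0r normrN -mulr_suml normrM (gtr0_norm t_gt0).
apply: le_trans (ler_norm_sum _ _ _) _; rewrite -sumr_const_seq mulr_suml.
by apply: ler_sum => v _; apply: m_expansion; apply: pos_in.
Qed.

Lemma expansion_ge0 v : v != x -> 0 <= A v.
Proof.
move=> vx; rewrite -oppr_le0; apply: (le0_of_le_linear t0_gt0 K_ge0) => t t_gt0 t_le.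
have [m_ge0 _ _] := m_prob (pos_in t_gt0 t_le).
have := m_expansion v (pos_in t_gt0 t_le); rewrite m0_dirac (negPf vx) subr0.
rewrite ler_norml expr2 => /andP[_ mt_le]; rewrite -(ler_pM2r t_gt0).
have := m_ge0 v; nra.
Qed.

Lemma expansion_supp v : v \notin s -> A v = 0.
Proof.
move=> vs; apply/eqP; rewrite -normr_le0.
apply: (le0_of_le_linear t0_gt0 K_ge0) => t t_gt0 t_le.
have [[_ mt_supp _] [_ m0_supp _]] := (m_prob (pos_in t_gt0 t_le), m_prob zero_in).
have := m_expansion v (pos_in t_gt0 t_le).
rewrite mt_supp // m0_supp // subr0 sub0r normrN normrM (gtr0_norm t_gt0).
by rewrite expr2 mulrA ler_pM2r.
Qed.

Lemma dirac_center_in : x \in s.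
Proof.
have [_ m0_supp _] := m_prob zero_in.
by apply: contraT => /m0_supp; rewrite m0_dirac eqxx => /eqP; rewrite oner_eq0.
Qed.

Lemma linearization_fin_prob (t : R) : 0 <= t -> t * `|A x| <= 1 ->
  fin_prob s (affine_path (m 0) A t).
Proof.
move=> t_ge0 tA; have [_ m0_supp m01] := m_prob zero_in; split.
- move=> v; rewrite /affine_path m0_dirac; case: eqP => [->|/eqP vx].
    by have := ler_norm (- A x); rewrite normrN; nra.
  by rewrite add0r mulr_ge0 // expansion_ge0.
- by move=> v vs; rewrite /affine_path m0_supp // expansion_supp // mulr0 addr0.
- by rewrite big_split /= m01 -mulr_sumr expansion_sum0 mulr0 addr0.
Qed.

Lemma linearization_l1 (t : R) : 0 <= t <= t0 ->
  \sum_(v <- s) `|m t v - affine_path (m 0) A t v| <= K *+ size s * t ^+ 2.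
Proof.
move=> t_in; rewrite -sumr_const_seq mulr_suml; apply: ler_sum => v _.
by rewrite /affine_path opprD addrA (mulrC t); apply: m_expansion.
Qed.

End FirstOrderExpansion.

Section W1FirstOrder.
Variables (R : realType) (V : choiceType) (d : V -> V -> R) (s : seq V) (x y : V).
Variables (mx my : R -> V -> R) (Ax Ay : V -> R) (t0 K : R).
Hypotheses (s_uniq : uniq s) (t0_gt0 : 0 < t0) (K_ge0 : 0 <= K).
Hypotheses (d_ge0 : forall a b, 0 <= d a b) (d_yy : d y y = 0).
Hypothesis d_tri : forall a b c, d a c <= d a b + d b c.
Hypotheses (mx_prob : forall t : R, 0 <= t <= t0 -> fin_prob s (mx t))
           (my_prob : forall t : R, 0 <= t <= t0 -> fin_prob s (my t)).
Hypotheses (mx0 : forall v, mx 0 v = if v == x then 1 else 0)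
           (my0 : forall v, my 0 v = if v == y then 1 else 0).
Hypothesis mx_expansion :
  forall (t : R) v, 0 <= t <= t0 -> `|mx t v - mx 0 v - Ax v * t| <= K * t ^+ 2.
Hypothesis my_expansion :
  forall (t : R) v, 0 <= t <= t0 -> `|my t v - my 0 v - Ay v * t| <= K * t ^+ 2.

Let psi t := fine (W1 d (affine_path (mx 0) Ax t) (affine_path (my 0) Ay t)).

(* Below [t1] the linearized measures [mx 0 + t Ax] and [my 0 + t Ay] are
   nonnegative at their centers, hence probability measures. *)
Let t1 := Num.min t0 (1 / (1 + `|Ax x| + `|Ay y|)).

Let t1_gt0 : 0 < t1.
Proof. by rewrite lt_min t0_gt0 divr_gt0. Qed.

Let t1_le : t1 <= t0. Proof. by rewrite ge_min lexx. Qed.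

Let xs : x \in s. Proof. exact: dirac_center_in t0_gt0 mx_prob mx0. Qed.
Let ys : y \in s. Proof. exact: dirac_center_in t0_gt0 my_prob my0. Qed.

Let linearization_prob (t : R) : 0 <= t -> t <= t1 ->
  fin_prob s (affine_path (mx 0) Ax t) /\ fin_prob s (affine_path (my 0) Ay t).
Proof.
move=> t_ge0 t_le.
have [Ax_ge0 Ay_ge0] := (normr_ge0 (Ax x), normr_ge0 (Ay y)).
have t_den : t * (1 + `|Ax x| + `|Ay y|) <= 1.
  rewrite -ler_pdivlMr; last lra.
  by apply: le_trans t_le _; rewrite ge_min lexx orbT.
split.
- by apply: (linearization_fin_prob t0_gt0 K_ge0 mx_prob mx0 mx_expansion t_ge0); nra.
- by apply: (linearization_fin_prob t0_gt0 K_ge0 my_prob my0 my_expansion t_ge0); nra.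
Qed.

Let c0 := \sum_(v <- s) d v y * Ax v - \sum_(v <- s) d v y * Ay v.

(* Kantorovich duality tested against the 1-Lipschitz function [d _ y]. *)
Let psi_lower (t : R) : 0 < t -> t <= t1 -> d x y + t * c0 <= psi t.
Proof.
move=> t_gt0 t_le; have [lx_prob ly_prob] := linearization_prob (ltW t_gt0) t_le.
apply: le_trans (W1_ge_dual s_uniq d_ge0 lx_prob ly_prob (fun a b => d_tri a b y)).
have dual_path (m : R -> V -> R) A z : (forall v, m 0 v = if v == z then 1 else 0) ->
    z \in s -> \sum_(a <- s) d a y * affine_path (m 0) A t a
                = d z y + t * \sum_(a <- s) d a y * A a.
  move=> m0 zs; rewrite /affine_path.
  under eq_bigr do rewrite mulrDr m0 mulrCA.
  by rewrite big_split /= sum_mul_delta // mulr_sumr.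
by rewrite (dual_path mx Ax x mx0 xs) (dual_path my Ay y my0 ys) d_yy /c0; lra.
Qed.

Let dirac_coupling_cost : fin_cost d s (fun a b => mx 0 a * my 0 b) = d x y.
Proof.
rewrite /fin_cost -(sum_mul_delta (fun a => d a y) s_uniq xs).
apply: eq_big_seq => a _; rewrite -mx0.
rewrite -(sum_mul_delta (fun b => d a b * mx 0 a) s_uniq ys).
by apply: eq_big_seq => b _; rewrite my0 mulrA.
Qed.

Let psi_convex (s' t : R) : 0 < s' -> s' <= t -> t <= t1 ->
  psi s' <= s' / t * psi t + (1 - s' / t) * d x y.
Proof.
move=> s'_gt0 s'_le t_le; have t_gt0 := lt_le_trans s'_gt0 s'_le.
have [lxs lys] := linearization_prob (ltW s'_gt0) (le_trans s'_le t_le).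
have [lxt lyt] := linearization_prob (ltW t_gt0) t_le.
have zero_in : 0 <= (0 : R) <= t0 by rewrite lexx ltW.
rewrite -dirac_coupling_cost; apply: W1_affine_path_convex => //.
  by rewrite s'_gt0.
exact: fin_coupling_prod (mx_prob zero_in) (my_prob zero_in).
Qed.

Let D := \sum_(a <- s) \sum_(b <- s) d a b.

Let d_le a b : a \in s -> b \in s -> d a b <= D.
Proof.
move=> ha hb; apply: le_trans (ler_sum_term s_uniq ha _).
  exact: ler_sum_term s_uniq hb _.
by move=> c _; apply: sumr_ge0_seq.
Qed.

Let W1_near_psi (t : R) : 0 < t -> t <= t1 ->
  `|fine (W1 d (mx t) (my t)) - psi t| <= D * (K *+ size s + K *+ size s) * t ^+ 2.
Proof.
move=> t_gt0 t_le; have t_in : 0 <= t <= t0 by rewrite ltW //= (le_trans t_le).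
have [lxt lyt] := linearization_prob (ltW t_gt0) t_le.
apply: le_trans
  (W1_lipschitz s_uniq d_ge0 d_le (mx_prob t_in) (my_prob t_in) lxt lyt) _.
rewrite -mulrA; apply: ler_wpM2l; first exact: le_trans (d_ge0 x x) (d_le xs xs).
rewrite mulrDl; apply: lerD.
- exact (linearization_l1 s mx_expansion t_in).
- exact (linearization_l1 s my_expansion t_in).
Qed.

Lemma W1_slope_cvg : exists L : R,
  (fine (W1 d (mx t) (my t)) - d x y) / t @[t --> 0^'+] --> L.
Proof.
have [L psi_cvg] := chord_slope_cvg t1_gt0 psi_convex psi_lower.
exists L; apply: (cvg_at_right0_quadratic_perturb (g := fun t => psi t - d x y)
  t1_gt0 _ psi_cvg).
by move=> t t_gt0 t_le; rewrite opprB addrA subrK; apply: W1_near_psi.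
Qed.

End W1FirstOrder.

Section RandomWalks.
Variables (R : realType) (V : choiceType) (mu : V -> R -> V -> R).

Lemma local_walk_support (zs : seq V) : local_walk mu ->
  exists2 s : seq V, uniq s & forall z, z \in zs ->
    forall (t : R) v, 0 <= t <= 1 -> v \notin s -> mu z t v = 0.
Proof.
move=> loc; elim: zs => [|z zs [s _ supp]]; first by exists [::].
have [K [/finite_seqP[sz ->] K_supp]] := loc z.
exists (undup (sz ++ s)) => [|u]; first exact: undup_uniq.
rewrite in_cons => /orP[/eqP-> | uzs] t v ht; rewrite mem_undup mem_cat negb_or;
  case/andP=> vsz vs; last exact: supp.
by apply/eqP; apply: contraNT vsz => /(K_supp t ht v).
Qed.

Lemma time_analytic_taylor1 z v : time_analytic mu ->
  exists A : R, exists2 tau : R, 0 < tau & exists K : R, forall t : R,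
    0 <= t <= tau -> `|mu z t v - mu z 0 v - A * t| <= K * t ^+ 2.
Proof.
move=> /(_ z v) [del [del_gt0 [f [f_an f_mu]]]].
have [|r [r_gt0 [a conv]]] := f_an 0; first by rewrite /=; lra.
have [tau tau_gt0 [K fK]] := power_series_taylor1 r_gt0 conv.
have f0 : f 0 = a 0%N.
  have := fK 0; rewrite subrr normr0 (ltW tau_gt0) mulr0 subr0 expr0n /= mulr0.
  by move=> /(_ isT); rewrite normr_le0 subr_eq0 => /eqP.
exists (a 1%N), (Num.min tau 1); first by rewrite lt_min tau_gt0 ltr01.
exists K => t /andP[t_ge0]; rewrite le_min => /andP[t_tau t_le1].
have [t_in zero_in] : 0 <= t <= 1 /\ 0 <= (0 : R) <= 1.
  by rewrite t_ge0 t_le1 lexx ler01.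
rewrite -(f_mu t t_in) -(f_mu 0 zero_in) f0.
by have := fK t; rewrite !subr0 ger0_norm // => /(_ t_tau).
Qed.

Lemma uniform_quadratic_bound (T : eqType) (r : seq T) (e : T -> R -> R) :
  (forall i, exists2 tau : R, 0 < tau & exists K : R, forall t : R,
     0 <= t <= tau -> `|e i t| <= K * t ^+ 2) ->
  exists2 tau : R, 0 < tau & exists2 K : R, 0 <= K &
    forall i (t : R), i \in r -> 0 <= t <= tau -> `|e i t| <= K * t ^+ 2.
Proof.
move=> bound; elim: r => [|i r [tau tau_gt0 [K K_ge0 eK]]].
  by exists 1 => //; exists 0.
have [tau' tau'_gt0 [K' e'K]] := bound i.
exists (Num.min tau tau'); first by rewrite lt_min tau_gt0.
exists (Num.max K K'); first by rewrite le_max K_ge0.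
move=> j t; rewrite in_cons le_min => /orP[/eqP-> | jr] /and3P[t_ge0 t_tau t_tau'].
  apply: le_trans (e'K t _) _; first by rewrite t_ge0.
  by apply: ler_wpM2r; [exact: exprn_ge0 | rewrite le_max lexx orbT].
apply: le_trans (eK j t jr _) _; first by rewrite t_ge0.
by apply: ler_wpM2r; [exact: exprn_ge0 | rewrite le_max lexx].
Qed.

Lemma time_analytic_expansion (zs s : seq V) : time_analytic mu ->
  (forall z, z \in zs ->
     forall (t : R) v, 0 <= t <= 1 -> v \notin s -> mu z t v = 0) ->
  exists A : V -> V -> R, exists2 t0 : R, 0 < t0 <= 1 & exists2 K : R, 0 <= K &
    forall z, z \in zs -> forall (t : R) v, 0 <= t <= t0 ->
      `|mu z t v - mu z 0 v - A z v * t| <= K * t ^+ 2.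
Proof.
move=> analytic supp.
have [A A_bound] := boolp.choice (fun zv => time_analytic_taylor1 zv.1 zv.2 analytic).
have [tau tau_gt0 [K K_ge0 AK]] := uniform_quadratic_bound
  (e := fun zv t => mu zv.1 t zv.2 - mu zv.1 0 zv.2 - A zv * t)
  [seq (z, v) | z <- zs, v <- s] A_bound.
exists (fun z v => if v \in s then A (z, v) else 0), (Num.min tau 1).
  by rewrite lt_min tau_gt0 ltr01 ge_min lexx orbT.
exists K => // z zzs t v; rewrite le_min => /and3P[t_ge0 t_tau t_le1].
case: ifPn => vs; first by apply: (AK (z, v)); rewrite ?allpairs_f ?t_ge0.
have [t_in zero_in] : 0 <= t <= 1 /\ 0 <= (0 : R) <= 1.
  by rewrite t_ge0 t_le1 lexx ler01.
rewrite (supp z zzs t v t_in vs) (supp z zzs 0 v zero_in vs) mul0r !subr0 normr0.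
exact: mulr_ge0 K_ge0 (exprn_ge0 _ t_ge0).
Qed.

End RandomWalks.

Theorem mainTheorem8 (R : realType) (V : choiceType) (E : V -> V -> Prop)
    (d : V -> V -> R) (mu : V -> R -> V -> R) :
  locally_finite_graph E -> is_distance d -> d_complete d ->
  random_walk d mu -> local_walk mu -> time_analytic mu ->
  forall x y : V, x <> y ->
    exists L : R, ORic_eps d mu eps x y / eps @[eps --> 0^'+] --> L.
Proof.
move=> _ [d_ge0 [d_eq0 [_ d_tri]]] _ walk loc analytic x y xy.
have [s s_uniq supp] := local_walk_support [:: x; y] loc.
have [A [t0 /andP[t0_gt0 t0_le1] [K K_ge0 expansion]]] :=
  time_analytic_expansion analytic supp.
have [x_in y_in] : x \in [:: x; y] /\ y \in [:: x; y] by rewrite !inE !eqxx orbT.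
have prob z : z \in [:: x; y] -> forall t : R, 0 <= t <= t0 -> fin_prob s (mu z t).
  move=> zxy t /andP[t_ge0 t_le].
  have t_in : 0 <= t <= 1 by rewrite t_ge0 (le_trans t_le).
  apply: fin_prob_of_prob_measure => //; first by case: ((walk z).1 t t_in).
  by move=> v; apply: supp.
have dirac z v : mu z 0 v = if v == z then 1 else 0 by have [_ [_ ->]] := walk z.
have [L W1_cvg] := W1_slope_cvg s_uniq t0_gt0 K_ge0 d_ge0 ((d_eq0 y y).2 erefl) d_tri
  (prob x x_in) (prob y y_in) (dirac x) (dirac y)
  (expansion x x_in) (expansion y y_in).
have dxy_neq0 : d x y != 0 by apply/eqP => /d_eq0.
exists (- L / d x y).
have -> : (fun eps => ORic_eps d mu eps x y / eps) =
    (fun eps => - ((fine (W1 d (mu x eps) (mu y eps)) - d x y) / eps) / d x y).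
  apply/funext => eps; rewrite /ORic_eps -[X in (X - _) / _](divff dxy_neq0) -mulrBl.
  by ring.
by apply: cvgMr_tmp; apply: cvgN.
Qed.
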